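(* Let $\tau\ge1$ and let $\mathcal C$ be any finite set of candidates. Form the pairwise majority graph on $\mathcal C$ in which, for each pair, the winner is determined by Weighted Majority Rule 1. Then every candidate in the uncovered set of this graph has distortion at most $$\min\Big\{\max\big\{\tfrac{3\tau-1}{\tau+1},\tfrac{\tau+2}{\tau}\big\}+2,\ \max\big\{(\tfrac{3\tau-1}{\tau+1})^2,(\tfrac{\tau+2}{\tau})^2\big\}\Big\}.$$
   Context: Voters $N=\{1,\dots,n\}$ and candidates $\mathcal C$ are points of an arbitrary metric space $(X,d)$. Voter $i$ prefers $P$ to $Q$ only if $d(i,P)\le d(i,Q)$, with preference strength $\alpha_i^{PQ}=d(i,Q)/d(i,P)\ge1$. $SC(Y)=\sum_{i\in N}d(i,Y)$. Distortion of a candidate $P$ is $SC(P)/\min_{Z\in\mathcal C}SC(Z)$. Weighted Majority Rule 1 for a pair $P,Q$: voters whose preference between $P$ and $Q$ has strength $>\tau$ are strong, others weak; if $\tau\ge\sqrt2+1$ strong voters get weight $\frac{\tau+1}{\tau-1}$, weak voters weight $1$; if $\tau<\sqrt2+1$ strong voters get weight $\tau$, weak voters weight $1$; the candidate with larger total weight of supporters wins the pair (ties broken arbitrarily). A candidate $P$ is in the uncovered set of the resulting tournament if for every other candidate $Z$, either $P$ beats $Z$, or there is a candidate $Q$ such that $P$ beats $Q$ and $Q$ beats $Z$. *)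

From Stdlib Require Import Reals List.
Import ListNotations.
Open Scope R_scope.

Definition is_metric {X : Type} (d : X -> X -> R) : Prop :=
  (forall x y, 0 <= d x y) /\
  (forall x y, d x y = 0 <-> x = y) /\
  (forall x y, d x y = d y x) /\
  (forall x y z, d x z <= d x y + d y z).

Definition sum_voters (n : nat) (f : nat -> R) : R :=
  fold_right Rplus 0 (map f (seq 0 n)).

Definition SC {X : Type} (d : X -> X -> R) (n : nat) (v : nat -> X) (Y : X) : R :=
  sum_voters n (fun i => d (v i) Y).

Definition consistent_prefs {X : Type} (d : X -> X -> R) (n : nat) (v : nat -> X)
  (cands : list X) (pref : nat -> X -> X -> bool) : Prop :=
  forall i, (i < n)%nat ->
    (forall P Q, In P cands -> In Q cands -> P <> Q ->
       pref i P Q = true \/ pref i Q P = true) /\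
    (forall P Q, In P cands -> In Q cands ->
       ~ (pref i P Q = true /\ pref i Q P = true)) /\
    (forall P Q Z, In P cands -> In Q cands -> In Z cands ->
       pref i P Q = true -> pref i Q Z = true -> pref i P Z = true) /\
    (forall P Q, In P cands -> In Q cands ->
       pref i P Q = true -> d (v i) P <= d (v i) Q).

Definition strong_weight (tau : R) : R :=
  if Rle_dec (sqrt 2 + 1) tau then (tau + 1) / (tau - 1) else tau.

(* Voter i (preferring P to Q) is strong iff the strength
   alpha = d(i,Q)/d(i,P) exceeds tau, written multiplicatively
   d(i,Q) > tau * d(i,P) (so d(i,P)=0<d(i,Q) is strong (infinite strength),
   d(i,P)=d(i,Q)=0 is weak (strength 1)). *)
Definition is_strong {X : Type} (d : X -> X -> R) (tau : R) (x P Q : X) : bool :=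
  if Rlt_dec (tau * d x P) (d x Q) then true else false.

Definition WMR1_weight {X : Type} (d : X -> X -> R) (tau : R) (n : nat)
  (v : nat -> X) (pref : nat -> X -> X -> bool) (P Q : X) : R :=
  sum_voters n (fun i =>
    if pref i P Q then
      (if is_strong d tau (v i) P Q then strong_weight tau else 1)
    else 0).

(* beats is a tournament on cands produced by Weighted Majority Rule 1,
   with ties broken arbitrarily. *)
Definition WMR1_tournament {X : Type} (d : X -> X -> R) (tau : R) (n : nat)
  (v : nat -> X) (cands : list X) (pref : nat -> X -> X -> bool)
  (beats : X -> X -> Prop) : Prop :=
  forall P Q, In P cands -> In Q cands -> P <> Q ->
    (beats P Q \/ beats Q P) /\ ~ (beats P Q /\ beats Q P) /\
    (WMR1_weight d tau n v pref Q P < WMR1_weight d tau n v pref P Q -> beats P Q).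

Definition uncovered {X : Type} (cands : list X) (beats : X -> X -> Prop) (P : X) : Prop :=
  In P cands /\
  forall Z, In Z cands -> Z <> P ->
    beats P Z \/ exists Q, In Q cands /\ beats P Q /\ beats Q Z.

Definition distortion_bound (tau : R) : R :=
  Rmin (Rmax ((3 * tau - 1) / (tau + 1)) ((tau + 2) / tau) + 2)
       (Rmax (((3 * tau - 1) / (tau + 1)) ^ 2) (((tau + 2) / tau) ^ 2)).

From Stdlib Require Import Reals List Lra Lia Psatz Classical.
Open Scope R_scope.

(* Let f = max((3 tau - 1)/(tau + 1), (tau + 2)/tau).  The heart of the proof
   are two bounds for a pair where P beats Q under Weighted Majority Rule 1:
     (ratio)   SC(P) <= f SC(Q),
     (excess)  SC(P) <= SC(Q) + 2 SC(Z)  for every candidate Z.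
   Both come from one weighted counting argument: if each voter's term F_i is
   at most -K times its weight when it supports P and at most K times its
   weight when it supports Q, then sum_i F_i <= K (weight(Q) - weight(P)) <= 0.
   The per-voter inequalities are real arithmetic using only the triangle
   inequality and the strength threshold tau; the constant K is
   d(P,Q) / strong_weight for (ratio), and a case-dependent multiple of
   d(P,Z) - d(Q,Z) for (excess), with separate choices in the two regimes
   tau < sqrt 2 + 1 and tau >= sqrt 2 + 1 of the rule.
   An uncovered P reaches any Z through some Q with P ->= Q ->= Z in the
   reflexive closure of the tournament; chaining (ratio) twice gives f^2, and
   (excess) followed by (ratio) gives f + 2, whose minimum is the bound. *)

Lemma sum_voters_le (n : nat) (f g : nat -> R) :
  (forall i, (i < n)%nat -> f i <= g i) -> sum_voters n f <= sum_voters n g.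
Proof.
  unfold sum_voters; intros Hfg.
  assert (Hseq : forall i, In i (seq 0 n) -> f i <= g i)
    by (intros i Hi; apply in_seq in Hi; apply Hfg; lia).
  induction (seq 0 n) as [|i s IH]; simpl; [lra|].
  assert (f i <= g i) by (apply Hseq; left; reflexivity).
  assert (fold_right Rplus 0 (map f s) <= fold_right Rplus 0 (map g s))
    by (apply IH; intros j Hj; apply Hseq; right; exact Hj).
  lra.
Qed.

Lemma sum_voters_ext (n : nat) (f g : nat -> R) :
  (forall i, (i < n)%nat -> f i = g i) -> sum_voters n f = sum_voters n g.
Proof.
  intros Hfg; apply Rle_antisym; apply sum_voters_le;
    intros i Hi; rewrite (Hfg i Hi); lra.
Qed.

Lemma sum_voters_lin (n : nat) (a b : R) (f g : nat -> R) :
  sum_voters n (fun i => a * f i + b * g i) = a * sum_voters n f + b * sum_voters n g.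
Proof.
  unfold sum_voters; induction (seq 0 n) as [|i s IH]; simpl; [ring|].
  rewrite IH; ring.
Qed.

Lemma SC_nonneg {X : Type} (d : X -> X -> R) (n : nat) (v : nat -> X) (Y : X) :
  is_metric d -> 0 <= SC d n v Y.
Proof.
  intros [Hpos _].
  apply Rle_trans with (sum_voters n (fun _ => 0)).
  - unfold sum_voters; induction (seq 0 n); simpl; lra.
  - apply sum_voters_le; intros; apply Hpos.
Qed.

Lemma triangle_via {X : Type} (d : X -> X -> R) :
  is_metric d -> forall a b c, d a c <= d b a + d b c.
Proof. intros [_ [_ [Hsym Htri]]] a b c; rewrite (Hsym b a); apply Htri. Qed.

Lemma triangle_to {X : Type} (d : X -> X -> R) :
  is_metric d -> forall x a b, d x a <= d x b + d a b.
Proof. intros [_ [_ [Hsym Htri]]] x a b; rewrite (Hsym a b); apply Htri. Qed.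

Lemma strong_weight_regimes (tau : R) : 1 <= tau ->
  (strong_weight tau = tau /\ tau * tau - 2 * tau - 1 < 0) \/
  (strong_weight tau * (tau - 1) = tau + 1 /\ 0 <= tau * tau - 2 * tau - 1 /\ 1 < tau).
Proof.
  intros Htau; unfold strong_weight.
  pose proof (sqrt_pos 2) as Hs0; pose proof (sqrt_sqrt 2 ltac:(lra)) as Hs2.
  assert (1 < sqrt 2) by nra.
  destruct (Rle_dec (sqrt 2 + 1) tau).
  - right; split; [field; lra | split; nra].
  - left; split; [reflexivity | nra].
Qed.

Lemma strong_weight_ge1 (tau : R) : 1 <= tau -> 1 <= strong_weight tau.
Proof.
  intros Htau; destruct (strong_weight_regimes tau Htau) as [[-> _]|[Hw [_ Ht]]];
    [lra | nra].
Qed.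

(* Weight of a voter at distance a from the candidate it prefers and at
   distance b from the other one. *)
Definition vote_weight (tau a b : R) : R :=
  if Rlt_dec (tau * a) b then strong_weight tau else 1.

Lemma WMR1_weight_vote {X : Type} (d : X -> X -> R) (tau : R) (n : nat) (v : nat -> X)
  (pref : nat -> X -> X -> bool) (P Q : X) :
  WMR1_weight d tau n v pref P Q =
  sum_voters n (fun i => if pref i P Q then vote_weight tau (d (v i) P) (d (v i) Q) else 0).
Proof.
  apply sum_voters_ext; intros i _.
  unfold is_strong, vote_weight; destruct (Rlt_dec _ _); reflexivity.
Qed.

(* A voter located at distances y from P and x from Q "certifies" the bound
   F <= 0 with constant K when its term F is at most -K times its weight if
   it supports P and at most K times its weight if it supports Q. *)
Definition voter_certificate (tau K F y x : R) : Prop :=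
  (y <= x -> F <= - (K * vote_weight tau y x)) /\
  (x <= y -> F <= K * vote_weight tau x y).

(* The per-voter inequality behind SC(P) <= f SC(Q): with D = d(P,Q) and
   c = 1 / strong_weight, the term d(i,P) - f d(i,Q) is at most -D for a
   strong supporter of P, -c D for a weak one, and at most D, resp. c D,
   for a strong, resp. weak, supporter of Q. *)
Lemma ratio_voter_certificate (tau f c x y D : R) :
  1 <= tau -> 0 <= x -> 0 <= y -> 0 <= D ->
  D <= x + y -> y <= x + D -> x <= y + D ->
  tau + 2 <= f * tau -> 0 <= c -> 2 * c <= f - 1 -> c * strong_weight tau = 1 ->
  (f < tau -> tau - f <= c * (tau - 1)) ->
  voter_certificate tau (c * D) (y - f * x) y x.
Proof.
  intros Htau Hx Hy HD Hxy Hyx Hxy' Hf2 Hc0 Hc1 Hcw Hc2.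
  assert (Hf : 1 < f) by nra.
  assert (Estrong : c * D * strong_weight tau = D)
    by (rewrite Rmult_assoc, (Rmult_comm D), <- Rmult_assoc, Hcw; ring).
  unfold voter_certificate, vote_weight; split; intros Hsupp;
    destruct (Rlt_dec _ _) as [Hstrong|Hweak]; rewrite ?Estrong.
  - assert (0 <= (f - 1) * (x - tau * y)) by (apply Rmult_le_pos; lra).
    assert (0 <= (f * tau - tau - 2) * y) by (apply Rmult_le_pos; lra).
    nra.
  - assert (0 <= (f - 1) * (x + y - D)) by (apply Rmult_le_pos; lra).
    assert (0 <= (f + 1) * (x - y)) by (apply Rmult_le_pos; lra).
    assert (0 <= ((f - 1) - 2 * c) * D) by (apply Rmult_le_pos; lra).
    nra.
  - assert (0 <= (f - 1) * x) by (apply Rmult_le_pos; lra). nra.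
  - apply Rnot_lt_le in Hweak.
    destruct (Rlt_le_dec f tau) as [Hft|Hft].
    + specialize (Hc2 Hft).
      assert (0 <= (f - 1) * (tau * x - y)) by (apply Rmult_le_pos; lra).
      assert (0 <= (tau - f) * (x + D - y)) by (apply Rmult_le_pos; lra).
      assert (0 <= (c * (tau - 1) - (tau - f)) * D) by (apply Rmult_le_pos; lra).
      assert (Hm : (tau - 1) * (y - f * x) <= (tau - 1) * (c * D)) by nra.
      apply Rmult_le_reg_l in Hm; lra.
    + assert (0 <= (f - tau) * x) by (apply Rmult_le_pos; lra).
      assert (0 <= c * D) by (apply Rmult_le_pos; lra). nra.
Qed.

Lemma ratio_constant (tau f : R) :
  1 <= tau -> 3 * tau - 1 <= f * (tau + 1) -> tau + 2 <= f * tau ->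
  0 <= / strong_weight tau /\ 2 * / strong_weight tau <= f - 1 /\
  / strong_weight tau * strong_weight tau = 1 /\
  (f < tau -> tau - f <= / strong_weight tau * (tau - 1)).
Proof.
  intros Htau Hf1 Hf2.
  assert (Hw : 0 < strong_weight tau) by (pose proof (strong_weight_ge1 tau Htau); lra).
  split; [left; apply Rinv_0_lt_compat; exact Hw|].
  split; [|split; [field; lra|]].
  - destruct (strong_weight_regimes tau Htau) as [[-> Hreg]|[Hreg [_ Ht]]].
    + apply (Rmult_le_reg_r tau); [lra|].
      replace (2 * / tau * tau) with 2 by (field; lra). nra.
    + replace (/ strong_weight tau) with ((tau - 1) / (tau + 1))
        by (rewrite <- Hreg; field; split; lra).
      apply (Rmult_le_reg_r (tau + 1)); [lra|].
      replace (2 * ((tau - 1) / (tau + 1)) * (tau + 1)) with (2 * (tau - 1))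
        by (field; lra). nra.
  - intros Hft.
    destruct (strong_weight_regimes tau Htau) as [[-> Hreg]|[Hreg [_ Ht]]].
    + apply (Rmult_le_reg_r tau); [lra|].
      replace (/ tau * (tau - 1) * tau) with (tau - 1) by (field; lra). nra.
    + replace (/ strong_weight tau) with ((tau - 1) / (tau + 1))
        by (rewrite <- Hreg; field; split; lra).
      apply (Rmult_le_reg_r (tau + 1)); [lra|].
      replace ((tau - 1) / (tau + 1) * (tau - 1) * (tau + 1)) with ((tau - 1) * (tau - 1))
        by (field; lra). nra.
Qed.

(* The per-voter inequalities behind SC(P) <= SC(Q) + 2 SC(Z).  Write
   x = d(i,Q), y = d(i,P), z = d(i,Z), a = d(P,Z), q = d(Q,Z); the voter's
   term is y - x - 2 z, which never exceeds a - q by the triangle inequality.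
   When a <= q every term is already nonpositive for the supporters of P and
   bounded by a - q <= 0 for the others, so the constant 0 works. *)
Lemma excess_voter_certificate_close (tau a q x y z : R) :
  a <= q -> 0 <= z -> y <= z + a -> q <= x + z ->
  voter_certificate tau 0 (y - x - 2 * z) y x.
Proof.
  intros Haq Hz H1 H2; unfold voter_certificate; split; intros; lra.
Qed.

(* A constant B >= 0 pays for the voters in the excess bound when a > q if
   it dominates a - q once weighted as a strong voter, satisfies
   (tau - 1) a <= tau B (for the weak supporters of Q), and its strong weight
   is covered by the term of every strong supporter of P. *)
Definition excess_constant (tau a q B : R) : Prop :=
  0 <= B /\ a - q <= strong_weight tau * B /\ (tau - 1) * a <= tau * B /\
  (forall x y z, 0 <= y -> a <= y + z -> x <= z + q -> tau * y < x -> y <= x ->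
     strong_weight tau * B <= x - y + 2 * z).

Lemma excess_voter_certificate (tau a q B x y z : R) :
  1 <= tau -> q < a -> excess_constant tau a q B ->
  0 <= x -> 0 <= y -> 0 <= z ->
  y <= z + a -> q <= x + z -> a <= y + z -> x <= z + q ->
  voter_certificate tau (Rmin (a - q) B) (y - x - 2 * z) y x.
Proof.
  intros Htau Hqa [HB [HBw [HBa HBstrong]]] Hx Hy Hz H1 H2 H3 H4.
  specialize (HBstrong x y z Hy H3 H4).
  pose proof (strong_weight_ge1 tau Htau) as Hw1.
  set (w := strong_weight tau) in *.
  set (K := Rmin (a - q) B).
  assert (HK1 : K <= a - q) by apply Rmin_l.
  assert (HK2 : K <= B) by apply Rmin_r.
  assert (HKcase : K = a - q \/ K = B)
    by (unfold K, Rmin; destruct (Rle_dec (a - q) B); auto).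
  assert (HKw : a - q <= w * K) by (destruct HKcase as [-> | ->]; nra).
  unfold voter_certificate, vote_weight; fold w; split; intros Hsupp;
    destruct (Rlt_dec _ _) as [Hstrong|Hweak].
  - assert (w * K <= w * B) by (apply Rmult_le_compat_l; lra).
    specialize (HBstrong Hstrong Hsupp); lra.
  - lra.
  - lra.
  - apply Rnot_lt_le in Hweak.
    destruct HKcase as [HK | HK]; [lra|].
    assert (0 <= tau * ((a + q - 2 * x) - (y - x - 2 * z))) by (apply Rmult_le_pos; lra).
    assert (0 <= (tau - 1) * ((a - q) - (y - x - 2 * z))) by (apply Rmult_le_pos; lra).
    assert (Hm : tau * (y - x - 2 * z) <= tau * K) by nra.
    apply Rmult_le_reg_l in Hm; lra.
Qed.

Lemma excess_bound_moderate (tau a q : R) :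
  1 <= tau -> 0 <= q -> q < a ->
  strong_weight tau = tau -> tau * tau - 2 * tau - 1 < 0 ->
  exists B, excess_constant tau a q B.
Proof.
  intros Htau Hq Hqa Hw Hreg; unfold excess_constant; rewrite Hw.
  assert (H3t : tau < 3) by nra.
  set (LB := ((3 * tau - 1) * a - (3 - tau) * q) / (tau + 1)).
  assert (ELB : LB * (tau + 1) = (3 * tau - 1) * a - (3 - tau) * q)
    by (unfold LB; field; lra).
  assert (ELBt : tau * (LB / tau) = LB) by (field; lra).
  exists (LB / tau); rewrite ELBt.
  assert (HLBq : a - q <= LB).
  { apply (Rmult_le_reg_r (tau + 1)); [lra|]. rewrite ELB. nra. }
  assert (HLBa : (tau - 1) * a <= LB).
  { apply (Rmult_le_reg_r (tau + 1)); [lra|]. rewrite ELB.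
    assert (0 <= (3 - tau) * (tau * a - q)) by (apply Rmult_le_pos; nra). nra. }
  split; [apply Rmult_le_pos; [lra | left; apply Rinv_0_lt_compat; lra]|].
  split; [lra | split; [lra|]].
  intros x y z Hy H3 H4 Hstrong Hyx.
  apply (Rmult_le_reg_r (tau + 1)); [lra|]. rewrite ELB.
  assert (0 <= (3 - tau) * ((x - y + 2 * z) - (2 * x - 2 * y + a - q)))
    by (apply Rmult_le_pos; lra).
  assert (0 <= (2 * tau - 2) * ((x - y + 2 * z) - (x - 3 * y + 2 * a)))
    by (apply Rmult_le_pos; lra).
  nra.
Qed.

Lemma excess_bound_large (tau a q : R) :
  1 < tau -> 0 <= q -> q < a ->
  strong_weight tau * (tau - 1) = tau + 1 -> 0 <= tau * tau - 2 * tau - 1 ->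
  exists B, excess_constant tau a q B.
Proof.
  intros Htau Hq Hqa Hw Hreg; unfold excess_constant.
  set (w := strong_weight tau) in *.
  set (B := (tau - 1) * a / tau).
  assert (EB : tau * B = (tau - 1) * a) by (unfold B; field; lra).
  assert (EwB : w * B * tau = (tau + 1) * a).
  { unfold B. replace (w * ((tau - 1) * a / tau) * tau) with (w * (tau - 1) * a)
      by (field; lra).
    rewrite Hw; ring. }
  exists B.
  split; [unfold B; apply Rmult_le_pos; [nra | left; apply Rinv_0_lt_compat; lra]|].
  split; [apply (Rmult_le_reg_r tau); [lra|]; rewrite EwB; nra|].
  split; [lra|].
  intros x y z Hy H3 H4 Hstrong Hyx.
  apply (Rmult_le_reg_r tau); [lra|]. rewrite EwB.
  assert (0 <= (tau - 1) / 2 * ((x - y + 2 * z) - (2 * x - 2 * y + a - q)))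
    by (apply Rmult_le_pos; lra).
  assert (0 <= (tau + 1) / 2 * ((x - y + 2 * z) - (x - 3 * y + 2 * a)))
    by (apply Rmult_le_pos; lra).
  assert (0 <= (3 * tau * tau - 6 * tau - 1) / 2 * y) by (apply Rmult_le_pos; lra).
  assert (0 <= (tau - 1 + (tau + 1) / 2) * (x - tau * y)) by (apply Rmult_le_pos; lra).
  assert (0 <= (tau - 1) / 2 * (a - q)) by (apply Rmult_le_pos; lra).
  nra.
Qed.

Lemma excess_bound (tau a q : R) :
  1 <= tau -> 0 <= q -> q < a ->
  exists B, excess_constant tau a q B.
Proof.
  intros Htau Hq Hqa.
  destruct (strong_weight_regimes tau Htau) as [[Hw Hreg]|[Hw [Hreg Ht]]].
  - exact (excess_bound_moderate tau a q Htau Hq Hqa Hw Hreg).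
  - exact (excess_bound_large tau a q Ht Hq Hqa Hw Hreg).
Qed.

Definition max_factor (tau : R) : R :=
  Rmax ((3 * tau - 1) / (tau + 1)) ((tau + 2) / tau).

Lemma max_factor_admissible (tau : R) : 1 <= tau ->
  3 * tau - 1 <= max_factor tau * (tau + 1) /\ tau + 2 <= max_factor tau * tau /\
  1 <= max_factor tau.
Proof.
  intros Htau; unfold max_factor.
  set (f1 := (3 * tau - 1) / (tau + 1)); set (f2 := (tau + 2) / tau).
  assert (E1 : f1 * (tau + 1) = 3 * tau - 1) by (unfold f1; field; lra).
  assert (E2 : f2 * tau = tau + 2) by (unfold f2; field; lra).
  pose proof (Rmax_l f1 f2); pose proof (Rmax_r f1 f2).
  split; [rewrite <- E1; apply Rmult_le_compat_r; lra|].
  split; [rewrite <- E2; apply Rmult_le_compat_r; lra|].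
  assert (1 <= f2) by (apply (Rmult_le_reg_r tau); lra). lra.
Qed.

(* Since both candidate factors are nonnegative, the bound of the theorem is
   min(f + 2, f^2) for f = max_factor tau. *)
Lemma distortion_bound_max_factor (tau : R) : 1 <= tau ->
  distortion_bound tau = Rmin (max_factor tau + 2) (max_factor tau ^ 2).
Proof.
  intros Htau; unfold distortion_bound, max_factor.
  set (f1 := (3 * tau - 1) / (tau + 1)); set (f2 := (tau + 2) / tau).
  assert (0 <= f1) by (unfold f1; apply Rmult_le_pos; [lra | left; apply Rinv_0_lt_compat; lra]).
  assert (0 <= f2) by (unfold f2; apply Rmult_le_pos; [lra | left; apply Rinv_0_lt_compat; lra]).
  f_equal.
  destruct (Rle_dec f1 f2) as [H12|H21].
  - rewrite (Rmax_right f1 f2 H12), Rmax_right; [reflexivity|].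
    apply pow_incr; lra.
  - rewrite (Rmax_left f1 f2), Rmax_left; [reflexivity | apply pow_incr | ]; lra.
Qed.

Lemma two_step_bound (f sP sQ sZ : R) :
  1 <= f -> 0 <= sQ -> 0 <= sZ ->
  sP <= f * sQ -> sQ <= f * sZ -> sP <= sQ + 2 * sZ ->
  sP <= Rmin (f + 2) (f ^ 2) * sZ.
Proof.
  intros Hf HsQ HsZ Hratio1 Hratio2 Hexcess.
  unfold Rmin; destruct (Rle_dec (f + 2) (f ^ 2)); nra.
Qed.

Lemma uncovered_two_step {X : Type} (cands : list X) (beats : X -> X -> Prop) (P Z : X) :
  uncovered cands beats P -> In Z cands ->
  exists Q, In Q cands /\ (P = Q \/ beats P Q) /\ (Q = Z \/ beats Q Z).
Proof.
  intros [HP Hunc] HZ.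
  destruct (classic (Z = P)) as [-> | HZP]; [exists P; auto|].
  destruct (Hunc Z HZ HZP) as [Hwin | [Q [HQ [HPQ HQZ]]]].
  - exists Z; auto.
  - exists Q; auto.
Qed.

Section WeightedMajority.

Variables (X : Type) (d : X -> X -> R) (n : nat) (v : nat -> X) (cands : list X)
  (pref : nat -> X -> X -> bool) (beats : X -> X -> Prop) (tau : R).
Hypothesis metric_d : is_metric d.
Hypothesis tau_ge1 : 1 <= tau.
Hypothesis consistent : consistent_prefs d n v cands pref.
Hypothesis tournament : WMR1_tournament d tau n v cands pref beats.

Lemma winner_weight (P Q : X) :
  In P cands -> In Q cands -> P <> Q -> beats P Q ->
  WMR1_weight d tau n v pref Q P <= WMR1_weight d tau n v pref P Q.
Proof.
  intros HP HQ HPQ Hwin.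
  destruct (tournament P Q HP HQ HPQ) as [_ [Hasym _]].
  destruct (tournament Q P HQ HP (not_eq_sym HPQ)) as [_ [_ Hmaj]].
  apply Rnot_lt_le; intro Hlt; apply Hasym; split; auto.
Qed.

(* Weighted counting argument: if every voter certifies with the same
   constant K >= 0, then the sum of the voters' terms is nonpositive, since
   it is at most K times (weight of Q - weight of P) <= 0. *)
Lemma certificate_sum (P Q : X) (F : nat -> R) (K : R) :
  In P cands -> In Q cands -> P <> Q -> beats P Q -> 0 <= K ->
  (forall i, (i < n)%nat -> voter_certificate tau K (F i) (d (v i) P) (d (v i) Q)) ->
  sum_voters n F <= 0.
Proof.
  intros HP HQ HPQ Hwin HK Hcert.
  pose proof (winner_weight P Q HP HQ HPQ Hwin) as Hweight.
  rewrite !WMR1_weight_vote in Hweight.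
  set (wQ := fun i => if pref i Q P then vote_weight tau (d (v i) Q) (d (v i) P) else 0)
    in Hweight.
  set (wP := fun i => if pref i P Q then vote_weight tau (d (v i) P) (d (v i) Q) else 0)
    in Hweight.
  assert (Hterm : sum_voters n F <= sum_voters n (fun i => K * wQ i + (- K) * wP i)).
  { apply sum_voters_le; intros i Hi.
    destruct (consistent i Hi) as [Htotal [Hasym [_ Hdist]]].
    destruct (Hcert i Hi) as [HsupP HsupQ]; unfold wP, wQ.
    destruct (pref i P Q) eqn:EPQ.
    - assert (EQP : pref i Q P = false).
      { destruct (pref i Q P) eqn:E; [|reflexivity].
        exfalso; apply (Hasym P Q HP HQ); auto. }
      rewrite EQP; specialize (HsupP (Hdist P Q HP HQ EPQ)); lra.
    - destruct (Htotal P Q HP HQ HPQ) as [E|EQP]; [congruence|]; rewrite EQP.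
      specialize (HsupQ (Hdist Q P HQ HP EQP)); lra. }
  rewrite sum_voters_lin in Hterm; nra.
Qed.

Lemma winner_cost_ratio (P Q : X) (f : R) :
  In P cands -> In Q cands -> P <> Q -> beats P Q ->
  3 * tau - 1 <= f * (tau + 1) -> tau + 2 <= f * tau ->
  SC d n v P <= f * SC d n v Q.
Proof.
  intros HP HQ HPQ Hwin Hf1 Hf2.
  destruct (ratio_constant tau f tau_ge1 Hf1 Hf2) as [Hc0 [Hc1 [Hcw Hc2]]].
  pose proof metric_d as [Hpos [_ [Hsym _]]].
  assert (Hsum : sum_voters n (fun i => 1 * d (v i) P + (- f) * d (v i) Q) <= 0).
  { apply (certificate_sum P Q _ (/ strong_weight tau * d P Q) HP HQ HPQ Hwin);
      [apply Rmult_le_pos; [exact Hc0 | apply Hpos]|].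
    intros i _.
    pose proof (triangle_via d metric_d P (v i) Q).
    pose proof (triangle_to d metric_d (v i) P Q).
    pose proof (triangle_to d metric_d (v i) Q P).
    rewrite (Hsym Q P) in *.
    replace (1 * d (v i) P + - f * d (v i) Q) with (d (v i) P - f * d (v i) Q) by ring.
    apply ratio_voter_certificate; auto; lra. }
  rewrite sum_voters_lin in Hsum; unfold SC; lra.
Qed.

Lemma winner_cost_excess (P Q Z : X) :
  In P cands -> In Q cands -> P <> Q -> beats P Q ->
  SC d n v P <= SC d n v Q + 2 * SC d n v Z.
Proof.
  intros HP HQ HPQ Hwin.
  pose proof metric_d as [Hpos _].
  set (a := d P Z); set (q := d Q Z).
  assert (Hcert : exists K, 0 <= K /\ forall i, (i < n)%nat ->
    voter_certificate tau K (d (v i) P - d (v i) Q - 2 * d (v i) Z) (d (v i) P) (d (v i) Q)).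
  { destruct (Rlt_le_dec q a) as [Hqa|Haq].
    - destruct (excess_bound tau a q tau_ge1 (Hpos _ _) Hqa) as [B HB].
      exists (Rmin (a - q) B); split; [apply Rmin_glb; [lra | apply HB]|].
      intros i _.
      pose proof (triangle_to d metric_d (v i) P Z).
      pose proof (triangle_via d metric_d Q (v i) Z).
      pose proof (triangle_via d metric_d P (v i) Z).
      pose proof (triangle_to d metric_d (v i) Q Z).
      apply (excess_voter_certificate tau a q B); try assumption; apply Hpos.
    - exists 0; split; [lra|]; intros i _.
      apply (excess_voter_certificate_close tau a q); auto;
        [apply triangle_to | apply triangle_via]; auto. }
  destruct Hcert as [K [HK Hcert]].
  assert (Hsum : sum_voters n
     (fun i => 1 * (1 * d (v i) P + (-1) * d (v i) Q) + (-2) * d (v i) Z) <= 0).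
  { apply (certificate_sum P Q _ K HP HQ HPQ Hwin HK).
    intros i Hi.
    replace (1 * (1 * d (v i) P + -1 * d (v i) Q) + -2 * d (v i) Z)
      with (d (v i) P - d (v i) Q - 2 * d (v i) Z) by ring.
    apply Hcert; exact Hi. }
  rewrite !sum_voters_lin in Hsum; unfold SC; lra.
Qed.

Lemma step_costs (P Q Z : X) :
  In P cands -> In Q cands -> P = Q \/ beats P Q ->
  SC d n v P <= max_factor tau * SC d n v Q /\
  SC d n v P <= SC d n v Q + 2 * SC d n v Z.
Proof.
  intros HP HQ Hstep.
  destruct (max_factor_admissible tau tau_ge1) as [Hf1 [Hf2 Hf]].
  pose proof (SC_nonneg d n v Q metric_d); pose proof (SC_nonneg d n v Z metric_d).
  destruct (classic (P = Q)) as [<- | HPQ]; [split; nra|].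
  destruct Hstep as [-> | Hwin]; [contradiction|].
  split.
  - exact (winner_cost_ratio P Q _ HP HQ HPQ Hwin Hf1 Hf2).
  - exact (winner_cost_excess P Q Z HP HQ HPQ Hwin).
Qed.

End WeightedMajority.

Theorem mainTheorem6 (X : Type) (d : X -> X -> R) (n : nat) (v : nat -> X)
  (cands : list X) (pref : nat -> X -> X -> bool) (beats : X -> X -> Prop)
  (tau : R) (P : X) :
  is_metric d ->
  (0 < n)%nat ->
  cands <> nil -> NoDup cands ->
  1 <= tau ->
  consistent_prefs d n v cands pref ->
  WMR1_tournament d tau n v cands pref beats ->
  uncovered cands beats P ->
  forall Z, In Z cands -> SC d n v P <= distortion_bound tau * SC d n v Z.
Proof.
  intros Hmetric _ _ _ Htau Hcons Htour Hunc Z HZ.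
  pose proof Hunc as [HP _].
  destruct (uncovered_two_step cands beats P Z Hunc HZ) as [Q [HQ [HPQ HQZ]]].
  destruct (step_costs X d n v cands pref beats tau Hmetric Htau Hcons Htour P Q Z
              HP HQ HPQ) as [Hratio1 Hexcess].
  destruct (step_costs X d n v cands pref beats tau Hmetric Htau Hcons Htour Q Z Z
              HQ HZ HQZ) as [Hratio2 _].
  rewrite (distortion_bound_max_factor tau Htau).
  apply (two_step_bound _ _ (SC d n v Q)); auto.
  - apply max_factor_admissible; exact Htau.
  - apply SC_nonneg; exact Hmetric.
  - apply SC_nonneg; exact Hmetric.
Qed.
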